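(* Let $G=([n],E)$ be an undirected graph, and let $\mathrm{CIM}_G=\operatorname{conv}\left(c_\mathcal{G}\colon \mathcal{G}=([n],E')\text{ a DAG with skeleton } G\right)$. Then $\operatorname{diam}(\mathrm{CIM}_G)\leq |E|$.
   Context: For a directed acyclic graph (DAG) $\mathcal{G}$ on vertex set $[n]=\{1,\dots,n\}$, the characteristic imset $c_\mathcal{G}$ is the 0/1-vector indexed by the subsets $S\subseteq[n]$ with $|S|\geq 2$, with $c_\mathcal{G}(S)=1$ if there exists $i\in S$ such that $S\subseteq \mathrm{pa}_\mathcal{G}(i)\cup\{i\}$ (where $\mathrm{pa}_\mathcal{G}(i)$ is the set of parents of $i$), and $c_\mathcal{G}(S)=0$ otherwise. The skeleton of a DAG is the undirected graph with the same vertices and adjacencies. For a polytope $P$, the vertex-edge graph $G(P)$ has the vertices of $P$ as nodes, with two vertices adjacent iff their convex hull is an edge of $P$; $\operatorname{diam}(P)$ is the maximum over pairs of vertices of the length of a shortest path between them in $G(P)$. *)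

From HB Require Import structures.
From mathcomp Require Import all_boot all_order all_algebra.
Set Implicit Arguments. Unset Strict Implicit. Unset Printing Implicit Defensive.
Import Order.TTheory GRing.Theory Num.Theory.
Local Open Scope ring_scope.

(** Coordinates: subsets S of [n] = 'I_n with |S| >= 2. *)
Definition bigsub (n : nat) := {S : {set 'I_n} | (1 < #|S|)%N}.

Definition pt (R : realFieldType) (n : nat) := {ffun bigsub n -> R}.

Section Defs.
Variables (R : realFieldType) (n : nat).
Local Notation pt := (pt R n).

(** Directed graphs on [n]: d i j means an arrow i -> j. *)
Definition acyclic (d : rel 'I_n) : Prop :=
  forall x y : 'I_n, d x y -> ~~ connect d y x.

Definition parents (d : rel 'I_n) (i : 'I_n) : {set 'I_n} := [set j | d j i].

Definition has_skeleton (d : rel 'I_n) (g : rel 'I_n) : Prop :=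
  forall i j : 'I_n, (d i j || d j i) = g i j.

Definition char_imset (d : rel 'I_n) : pt :=
  [ffun S : bigsub n =>
     if [exists i in val S, val S \subset i |: parents d i] then 1 else 0].

Definition simple_graph (g : rel 'I_n) : Prop := symmetric g /\ irreflexive g.
Definition num_edges (g : rel 'I_n) : nat :=
  #|[set p : 'I_n * 'I_n | (p.1 < p.2)%N && g p.1 p.2]|.

Definition dot (a x : pt) : R := \sum_(S : bigsub n) a S * x S.

Definition conv (V : pt -> Prop) (x : pt) : Prop :=
  exists (s : seq pt) (w : pt -> R),
    (forall v, v \in s -> V v) /\ (forall v, v \in s -> 0 <= w v) /\
    uniq s /\ \sum_(v <- s) w v = 1 /\
    forall S, x S = \sum_(v <- s) w v * v S.

Definition face (P F : pt -> Prop) : Prop :=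
  exists (a : pt) (b : R), (forall x, P x -> dot a x <= b) /\
    (forall x, F x <-> (P x /\ dot a x = b)).

Definition vertex (P : pt -> Prop) (v : pt) : Prop := face P (fun x => x = v).

Definition adjacent (P : pt -> Prop) (u v : pt) : Prop :=
  vertex P u /\ vertex P v /\ u <> v /\ face P (conv (fun x => x = u \/ x = v)).

Fixpoint walk (P : pt -> Prop) (u : pt) (s : seq pt) : Prop :=
  match s with
  | [::] => True
  | x :: s' => adjacent P u x /\ walk P x s'
  end.

Definition diam_le (P : pt -> Prop) (k : nat) : Prop :=
  forall u v, vertex P u -> vertex P v ->
    exists s : seq pt, (size s <= k)%N /\ walk P u s /\ last u s = v.

Definition CIM (g : rel 'I_n) : pt -> Prop :=
  conv (fun x => exists d : rel 'I_n, acyclic d /\ has_skeleton d g /\ x = char_imset d).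

End Defs.

From mathcomp Require Import all_boot all_order all_algebra.
From mathcomp Require Import ring lra zify.
Set Implicit Arguments. Unset Strict Implicit. Unset Printing Implicit Defensive.
Import Order.TTheory GRing.Theory Num.Theory.

(* Every vertex of CIM_G is the characteristic imset of a DAG with skeleton G.
   Given two such DAGs D and D', some arc x -> y of D that is reversed in D'
   can be reversed in D without creating a cycle (take one whose interval
   {z | x ->* z ->* y} is minimal); this decreases the number of arcs on which
   the two DAGs disagree, so at most |E| reversals lead from D to D'.  It
   remains to see that reversing one arc v -> u of D, giving D1, moves c_D to
   an adjacent vertex of CIM_G (or leaves it fixed).  With P = pa(u) \ v in D and
   Q = pa(v) \ u after the reversal, the two imsets differ only on sets
   {u, v} + T with T a subset of P or of Q, and the linear functional
     M (c_D + c_D1 - 1) + alpha [{u,v}+P] + beta [{u,v}+Q]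
       - sum_(x in P \ Q) [{u,v,x}] - sum_(y in Q \ P) [{u,v,y}],
   with M large and alpha = |P \ Q| + [Q \ P <> 0], beta symmetrically,
   is maximised over DAGs with skeleton G exactly at c_D and c_D1. *)

Section Convex.
Local Open Scope ring_scope.
Variables (R : realFieldType) (n : nat).
Local Notation pt := (pt R n).
Implicit Types (a x y p q : pt) (V W : pt -> Prop).

Lemma dot_conv_sum a (s : seq pt) (w : pt -> R) x :
  (forall S, x S = \sum_(v <- s) w v * v S) ->
  dot a x = \sum_(v <- s) w v * dot a v.
Proof.
move=> hx; rewrite /dot.
under eq_bigr => S _ do rewrite hx big_distrr.
rewrite exchange_big /=; apply: eq_bigr => v _.
by rewrite big_distrr /=; apply: eq_bigr => S _; rewrite mulrCA.
Qed.

Lemma conv_dot_le V a b x :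
  (forall y, V y -> dot a y <= b) -> conv V x -> dot a x <= b.
Proof.
move=> hle [s [w [hV [hw [_ [h1 hx]]]]]].
rewrite (dot_conv_sum a hx).
have -> : b = \sum_(v <- s) w v * b by rewrite -big_distrl /= h1 mul1r.
rewrite big_seq [X in _ <= X]big_seq; apply: ler_sum => v vs.
by apply: ler_wpM2l; [apply: hw | apply/hle/hV].
Qed.

Lemma conv_dot_eq V a b x :
  (forall y, V y -> dot a y = b) -> conv V x -> dot a x = b.
Proof.
move=> hV [s [w [hVs [hw [hu [h1 hx]]]]]].
rewrite (dot_conv_sum a hx) big_seq.
under eq_bigr => v vs do rewrite (hV v (hVs v vs)).
by rewrite -big_seq -big_distrl /= h1 mul1r.
Qed.

(* Drop the points of zero weight: all the others attain the bound. *)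
Lemma conv_dot_max V a b x :
  (forall y, V y -> dot a y <= b) -> conv V x -> dot a x = b ->
  conv (fun y => V y /\ dot a y = b) x.
Proof.
move=> hle [s [w [hV [hw [hu [h1 hx]]]]]] hxb.
have slack_ge0 v : v \in s -> 0 <= w v * (b - dot a v).
  by move=> vs; rewrite mulr_ge0 ?hw // subr_ge0; apply/hle/hV.
have slack_sum : \sum_(v <- s | v \in s) w v * (b - dot a v) = 0.
  rewrite -big_seq; under eq_bigr => v _ do rewrite mulrBr.
  by rewrite sumrB -big_distrl /= h1 mul1r -(dot_conv_sum a hx) hxb subrr.
have slack0 v : v \in s -> w v * (b - dot a v) = 0.
  move=> vs; move: (psumr_eq0 s slack_ge0); rewrite slack_sum eqxx.
  by move=> /esym/allP/(_ v vs); rewrite vs => /eqP.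
exists [seq v <- s | w v != 0], w; split; last split; last split; last split.
- move=> v; rewrite mem_filter => /andP [wv vs]; split; first exact: hV.
  by move/eqP: (slack0 v vs); rewrite mulf_eq0 (negbTE wv) /= subr_eq0 => /eqP ->.
- by move=> v; rewrite mem_filter => /andP [_ /hw].
- exact: filter_uniq.
- rewrite big_filter -h1 [in RHS](bigID (fun v => w v != 0)) /=.
  by rewrite [X in _ = _ + X]big1 ?addr0 // => v /negPn/eqP.
- move=> S; rewrite hx big_filter [in LHS](bigID (fun v => w v != 0)) /=.
  by rewrite [X in _ + X = _]big1 ?addr0 // => v /negPn/eqP ->; rewrite mul0r.
Qed.

Lemma conv_sub V W x : (forall y, V y -> W y) -> conv V x -> conv W x.
Proof.
move=> hVW [s [w [hV hrest]]].
by exists s, w; split; first by move=> v /hV/hVW.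
Qed.

Lemma conv_mem V x : V x -> conv V x.
Proof.
move=> hx; exists [:: x], (fun _ => 1); split; last split; last split; last split.
- by move=> v; rewrite inE => /eqP ->.
- by move=> v _; exact: ler01.
- by [].
- by rewrite big_seq1.
- by move=> S; rewrite big_seq1 mul1r.
Qed.

Lemma conv_eq1 p x : conv (fun y => y = p) x -> x = p.
Proof.
move=> [s [w [hVs [_ [_ [h1 hx]]]]]].
apply/ffunP => S; rewrite hx (eq_big_seq (fun v => w v * p S)).
  by rewrite -big_distrl /= h1 mul1r.
by move=> v /hVs ->.
Qed.

Lemma face_conv V W a b : (forall y, V y -> dot a y <= b) ->
  (forall y, W y <-> V y /\ dot a y = b) -> face (conv V) (conv W).
Proof.
move=> hle hW; exists a, b; split=> [x|x]; first exact: conv_dot_le.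
split=> [hx | [hx hxb]].
- split; first by apply: conv_sub hx => y /hW [].
  by apply: conv_dot_eq hx => y /hW [].
- by apply: conv_sub (conv_dot_max hle hx hxb) => y /hW.
Qed.

Lemma vertex_conv V a b p : (forall y, V y -> dot a y <= b) -> V p ->
  dot a p = b -> (forall y, V y -> dot a y = b -> y = p) -> vertex (conv V) p.
Proof.
move=> hle hp hpb huniq; exists a, b; split=> [x|x]; first exact: conv_dot_le.
split=> [-> | [hx hxb]]; first by split; first exact: conv_mem.
apply: conv_eq1; apply: conv_sub (conv_dot_max hle hx hxb) => y [].
exact: huniq.
Qed.

Lemma edge_conv V a b p q : (forall y, V y -> dot a y <= b) -> V p -> V q ->
  dot a p = b -> dot a q = b ->
  (forall y, V y -> dot a y = b -> y = p \/ y = q) ->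
  face (conv V) (conv (fun x => x = p \/ x = q)).
Proof.
move=> hle hp hq hpb hqb h; apply: face_conv hle _ => y.
by split=> [[]->|[]]; [split | split | apply: h].
Qed.

Lemma vertex_conv_mem V p : vertex (conv V) p -> V p.
Proof.
move=> [a [b [hle hF]]].
have [hp hpb] := proj1 (hF p) erefl.
have hleV y : V y -> dot a y <= b by move=> hy; apply/hle/conv_mem.
case: (conv_dot_max hleV hp hpb) => [[|y s] [w [hVs [_ [_ [h1 _]]]]]].
  by move: h1; rewrite big_nil => /eqP; rewrite eq_sym oner_eq0.
have [hy hyb] := hVs y (mem_head _ _).
by have -> : p = y by apply/esym/(proj2 (hF y)); split; first exact: conv_mem.
Qed.

End Convex.

Section Reversal.
Variable n : nat.
Implicit Types (d e : rel 'I_n).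

Lemma acyclic_irr d : acyclic d -> irreflexive d.
Proof. by move=> hd x; apply/negP => dxx; move: (hd x x dxx); rewrite connect0. Qed.

Lemma acyclic_asym d x y : acyclic d -> d x y -> d y x = false.
Proof. by move=> hd dxy; apply/negP => dyx; move: (hd x y dxy); rewrite connect1. Qed.

Lemma acyclic_neq d x y : acyclic d -> d x y -> x != y.
Proof. by move=> hd dxy; apply: contraTneq dxy => ->; rewrite acyclic_irr. Qed.

Lemma connect_first e x y : connect e x y -> x != y -> exists2 z, e x z & connect e z y.
Proof.
case/connectP=> [[|z s]] /=; first by move=> _ ->; rewrite eqxx.
by case/andP=> exz pth -> _; exists z => //; apply/connectP; exists s.
Qed.

Lemma acyclic_connect_antisym d x y :
  acyclic d -> connect d x y -> connect d y x -> x = y.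
Proof.
move=> hd cxy cyx; apply/eqP/negPn/negP => /(connect_first cxy) [z dxz czy].
by move: (hd x z dxz); rewrite (connect_trans czy cyx).
Qed.

Lemma connect_exit d d' p q : connect d p q ->
  connect d' p q \/ exists a b, [/\ d a b, ~~ d' a b, connect d p a & connect d b q].
Proof.
case/connectP=> s; elim: s p => [|z s IH] p /=; first by move=> _ ->; left.
case/andP=> dpz pth hq; case: (boolP (d' p z)) => [d'pz | nd'pz].
  case: (IH z pth hq) => [c | [a [b [dab nd'ab cza cbq]]]].
    by left; apply: connect_trans (connect1 d'pz) c.
  by right; exists a, b; split => //; apply: connect_trans (connect1 dpz) cza.
by right; exists p, z; split => //; apply/connectP; exists s.
Qed.

Definition rev_arc d x y : rel 'I_n := fun a b =>
  if (a == y) && (b == x) then true else if (a == x) && (b == y) then false else d a b.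

Definition del_arc d x y : rel 'I_n := fun a b => d a b && ~~ ((a == x) && (b == y)).

Lemma rev_arc_other d x y a b : ~~ ((a == y) && (b == x)) -> ~~ ((a == x) && (b == y)) ->
  rev_arc d x y a b = d a b.
Proof. by move=> h1 h2; rewrite /rev_arc (negbTE h1) (negbTE h2). Qed.

Lemma rev_arc_yx d x y : rev_arc d x y y x.
Proof. by rewrite /rev_arc !eqxx. Qed.

Lemma rev_arc_xy d x y : x != y -> rev_arc d x y x y = false.
Proof. by move=> xy; rewrite /rev_arc (negbTE xy) !eqxx. Qed.

Lemma connect_del_arc d x y p q : connect (del_arc d x y) p q -> connect d p q.
Proof. by apply: connect_sub => a b /andP [dab _]; apply: connect1. Qed.

Lemma connect_rev_arc d x y p q : connect (rev_arc d x y) p q ->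
  connect (del_arc d x y) p q \/
  connect (del_arc d x y) p y /\ connect (del_arc d x y) x q.
Proof.
case/connectP=> s; elim: s p => [|z s IH] p /=; first by move=> _ ->; left.
case/andP=> hpz pth hq; have := IH z pth hq.
rewrite /rev_arc in hpz; case: ifP hpz => [/andP [/eqP -> /eqP ->] _ | _].
  by case=> [cxq | [_ cxq]]; right.
case: ifP => // hn dpz; have dm : del_arc d x y p z by rewrite /del_arc dpz hn.
case=> [czq | [czy cxq]]; first by left; apply: connect_trans (connect1 dm) czq.
by right; split => //; apply: connect_trans (connect1 dm) czy.
Qed.

(* The only new cycle could close through [y -> x]; it needs a path
   [x ->* y] avoiding the reversed arc, whose first step is forbidden. *)
Lemma rev_arc_acyclic d x y : acyclic d -> d x y ->
  (forall z, d x z -> z != y -> ~~ connect d z y) -> acyclic (rev_arc d x y).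
Proof.
move=> hd dxy hcrit.
have no_bypass : ~ connect (del_arc d x y) x y.
  move=> /(connect_first) /(_ (acyclic_neq hd dxy)) [z /andP [dxz hz] czy].
  have zy : z != y by apply: contra hz => /eqP ->; rewrite !eqxx.
  by move: (hcrit z dxz zy); rewrite (connect_del_arc czy).
move=> a b hab; apply/negP => cba; apply: no_bypass.
move: hab; rewrite /rev_arc; case: ifP => [/andP [/eqP ea /eqP eb] _ | _].
  by subst a b; case: (connect_rev_arc cba) => [|[]].
case: ifP => // hn dab; have dm : del_arc d x y a b by rewrite /del_arc dab hn.
case: (connect_rev_arc cba) => [cba' | [cby cxa]].
  by move: (hd a b dab); rewrite (connect_del_arc cba').
exact: connect_trans cxa (connect_trans (connect1 dm) cby).
Qed.

Definition dinterval d (p : 'I_n * 'I_n) := [set z | connect d p.1 z && connect d z p.2].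

(* Among the arcs of [d] reversed in [d'], one with a minimal interval can
   be reversed: a path [x -> z ->* y] either yields an arc with a smaller
   interval reversed in [d'], or a cycle in [d']. *)
Lemma exists_reversible_arc d d' : acyclic d -> acyclic d' ->
  (forall a b, d a b || d b a = d' a b || d' b a) ->
  forall x y, d x y -> ~~ d' x y ->
  exists x' y', [/\ d x' y', ~~ d' x' y' & acyclic (rev_arc d x' y')].
Proof.
move=> hd hd' hsk x y; move: {2}#|dinterval d (x, y)| (leqnn #|dinterval d (x, y)|) => k.
elim: k x y => [|k IH] x y hk dxy nd'xy.
  have : 0 < #|dinterval d (x, y)|.
    by apply/card_gt0P; exists x; rewrite inE /= connect0 connect1.
  by rewrite leqn0 in hk; rewrite (eqP hk).
case: (boolP [forall z, d x z ==> (z != y) ==> ~~ connect d z y]) => hc.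
  exists x, y; split => //; apply: rev_arc_acyclic => // z dxz zy.
  by move/forallP: hc => /(_ z); rewrite dxz zy.
case/forallPn: hc => z; rewrite !negb_imply => /and3P [dxz zy].
move=> czy0; have czy : connect d z y by move: czy0; case: (connect d z y).
have d'yx : d' y x by move: (hsk x y); rewrite dxy (negbTE nd'xy) /= => /esym.
have cxy : connect d x y by apply: connect_trans (connect1 dxz) czy.
suff [a [b [dab nd'ab hpr]]] : exists a b,
    [/\ d a b, ~~ d' a b & dinterval d (a, b) \proper dinterval d (x, y)].
  by apply: (IH a b) => //; rewrite -ltnS; apply: leq_trans (proper_card hpr) hk.
case: (boolP (d' x z)) => d'xz.
  case: (connect_exit d' czy) => [c'zy | [a [b [dab nd'ab cza cby]]]].
    by move: (hd' y x d'yx); rewrite (connect_trans (connect1 d'xz) c'zy).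
  exists a, b; split => //; apply/properP; split.
    apply/subsetP => w; rewrite !inE /= => /andP [caw cwb].
    by rewrite (connect_trans (connect1 dxz) (connect_trans cza caw)) (connect_trans cwb cby).
  exists x; first by rewrite inE /= connect0 cxy.
  rewrite inE /=; apply/negP => /andP [cax _].
  by move: (hd x z dxz); rewrite (connect_trans cza cax).
exists x, z; split => //; apply/properP; split.
  apply/subsetP => w; rewrite !inE /= => /andP [cxw cwz].
  by rewrite cxw (connect_trans cwz czy).
exists y; first by rewrite inE /= cxy connect0.
rewrite inE /=; apply/negP => /andP [_ cyz].
by move: zy; rewrite (acyclic_connect_antisym hd czy cyz) eqxx.
Qed.

End Reversal.

Section Imset.
Variable n : nat.
Implicit Types (d e : rel 'I_n) (S T : {set 'I_n}).

Definition cim d S : bool := [exists i in S, S \subset i |: parents d i].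

Lemma cimP d S :
  reflect (exists2 i, i \in S & forall j, j \in S -> j = i \/ d j i) (cim d S).
Proof.
apply: (iffP existsP) => [[i /andP [iS /subsetP sub]] | [i iS h]].
  exists i => // j /sub; rewrite !inE => /orP [/eqP|]; auto.
exists i; rewrite iS /=; apply/subsetP => j /h; rewrite !inE.
by case=> [->|->]; rewrite ?eqxx ?orbT.
Qed.

Lemma eq_cim d e S : d =2 e -> cim d S = cim e S.
Proof.
move=> h; apply: eq_existsb => i.
by have -> : parents d i = parents e i by apply/setP => j; rewrite !inE h.
Qed.

Definition other_parents d u v : {set 'I_n} := parents d u :\ v.

Lemma in_other_parents d u v x : (x \in other_parents d u v) = d x u && (x != v).
Proof. by rewrite !inE andbC. Qed.

Definition set2U (u v : 'I_n) T := u |: (v |: T).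

Lemma card_set2U u v T : u != v -> 1 < #|set2U u v T|.
Proof. by move=> uv; apply/card_gt1P; exists u, v; rewrite !inE !eqxx ?orbT. Qed.

End Imset.

Record reversal n (g D D1 : rel 'I_n) (u v : 'I_n) : Prop := Reversal {
  rev_acyclic : acyclic D;
  rev_acyclic1 : acyclic D1;
  rev_skel : has_skeleton D g;
  rev_skel1 : has_skeleton D1 g;
  rev_vu : D v u;
  rev_uv : D1 u v;
  rev_other : forall a b, ~~ ((a == u) && (b == v)) -> ~~ ((a == v) && (b == u)) ->
    D1 a b = D a b }.

(* The DAGs not penalised by the large weight M of the separating functional. *)
Record compatible n (g D D1 E : rel 'I_n) : Prop := Compatible {
  compat_acyclic : acyclic E;
  compat_skel : has_skeleton E g;
  compat_agree : forall S : {set 'I_n}, 1 < #|S| -> cim D S = cim D1 S -> cim E S = cim D S }.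

Lemma reversal_sym n (g D D1 : rel 'I_n) u v : reversal g D D1 u v -> reversal g D1 D v u.
Proof. by case=> *; split => // a b h1 h2; apply/esym; auto. Qed.

Lemma compatible_sym n (g D D1 E : rel 'I_n) : compatible g D D1 E -> compatible g D1 D E.
Proof. by case=> hE hsk hag; split => // S cS e; rewrite hag // e. Qed.

Lemma compatible_self n (g D D1 : rel 'I_n) u v : reversal g D D1 u v -> compatible g D D1 D.
Proof. by case=> *; split. Qed.

Definition triples n (u v : 'I_n) (A B : {set 'I_n}) : {set bigsub n} :=
  [set S : bigsub n | [exists x in A :\: B, val S == set2U u v [set x]]].

Definition count_cim n (E : rel 'I_n) (X : {set bigsub n}) := #|[set S in X | cim E (val S)]|.

Lemma count_cim_le n (E : rel 'I_n) X : count_cim E X <= #|X|.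
Proof. by apply/subset_leq_card/subsetP => S; rewrite inE => /andP []. Qed.

Definition bigset n (T : {set 'I_n}) (h : 1 < #|T|) : bigsub n := exist _ T h.

Lemma mem_triples n (u v : 'I_n) A B x (uv : u != v) :
  x \in A :\: B -> bigset (card_set2U [set x] uv) \in triples u v A B.
Proof. by move=> xAB; rewrite inE; apply/existsP; exists x; rewrite xAB /=. Qed.

Lemma triples_gt0 n (u v : 'I_n) A B : 0 < #|triples u v A B| -> exists x, x \in A :\: B.
Proof. by case/card_gt0P=> S; rewrite inE => /existsP [x /andP [xAB _]]; exists x. Qed.

Lemma triples0 n (u v : 'I_n) A B (uv : u != v) :
  #|triples u v A B| = 0 -> forall x, x \notin A :\: B.
Proof.
move=> /eqP; rewrite cards_eq0 => /eqP h0 x; apply/negP => /(mem_triples uv).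
by rewrite h0 inE.
Qed.

Definition ntriples n (D D1 : rel 'I_n) u v :=
  #|triples u v (other_parents D u v) (other_parents D1 v u)|.

Definition same_cim n (d e : rel 'I_n) :=
  forall S : {set 'I_n}, 1 < #|S| -> cim d S = cim e S.

Section ReversalImsets.
Variables (n : nat) (g D D1 : rel 'I_n) (u v : 'I_n).
Hypothesis r : reversal g D D1 u v.
Implicit Types S : {set 'I_n}.
Local Notation P := (other_parents D u v).
Local Notation Q := (other_parents D1 v u).
Local Notation SP := (set2U u v P).
Local Notation SQ := (set2U v u Q).

Lemma reversal_neq : u != v.
Proof. by rewrite eq_sym (acyclic_neq (rev_acyclic r) (rev_vu r)). Qed.

Lemma rev_other_u a b : a != u -> b != u -> D1 a b = D a b.
Proof. by move=> au bu; apply: (rev_other r); rewrite ?(negbTE au) ?(negbTE bu) ?andbF. Qed.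

Lemma skel_sym a b : g a b = g b a.
Proof. by rewrite -!(rev_skel r) orbC. Qed.

Lemma arc_skel a b : D a b -> g a b.
Proof. by move=> h; rewrite -(rev_skel r) h. Qed.

Lemma other_parents_neq x : x \in P -> x != u.
Proof. by rewrite in_other_parents => /andP [/(acyclic_neq (rev_acyclic r))]. Qed.

Lemma other_parents_nv x : x \in P -> x != v.
Proof. by rewrite in_other_parents => /andP []. Qed.

(* Otherwise [u -> v -> k -> u] would be a cycle of [D1]. *)
Lemma other_parents_no_arc k : k \in P -> D v k = false.
Proof.
move=> kP; have ku := other_parents_neq kP; move: kP.
rewrite in_other_parents => /andP [dku kv]; apply/negP => dvk.
have d1vk : D1 v k by rewrite rev_other_u // eq_sym reversal_neq.
have d1ku : D1 k u by rewrite (rev_other r) // ?(negbTE ku) ?(negbTE kv).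
by move: (rev_acyclic1 r (rev_uv r)); rewrite (connect_trans (connect1 d1vk) (connect1 d1ku)).
Qed.

Lemma lost_parent_nadj x : x \in P :\: Q -> ~~ g x v.
Proof.
rewrite inE => /andP [xQ xP]; have xu := other_parents_neq xP.
have nd1 : ~~ D1 x v by move: xQ; rewrite in_other_parents xu andbT.
have ndxv : ~~ D x v by rewrite -rev_other_u // eq_sym reversal_neq.
by rewrite -(rev_skel r) (negbTE ndxv) (other_parents_no_arc xP).
Qed.

Lemma cim_reversal_notin S : u \notin S -> cim D1 S = cim D S.
Proof.
move=> uS; apply/idP/idP => /cimP [i iS h]; apply/cimP; exists i => // j jS;
  (case: (h j jS) => [->|hji]; [by left | right]).
- by rewrite -rev_other_u //; apply: contraNneq uS => <-.
- by rewrite rev_other_u //; apply: contraNneq uS => <-.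
Qed.

Lemma cim_reversal_lost S : cim D S -> ~~ cim D1 S ->
  [/\ u \in S, v \in S, (forall j, j \in S -> [|| j == u, j == v | j \in P])
    & exists2 x, x \in S & x \in P :\: Q].
Proof.
move=> /cimP [i iS h] nD1.
have iu : i = u.
  apply/eqP/negPn/negP => iu; case: (eqVneq i v) => iv.
    subst i; case: (boolP (u \in S)) => uS.
      case: (h u uS) => [e|duv]; first by move: reversal_neq; rewrite e eqxx.
      by move: (acyclic_asym (rev_acyclic r) (rev_vu r)); rewrite duv.
    by move: nD1; rewrite cim_reversal_notin // => /negP; apply; apply/cimP; exists v.
  move: nD1 => /negP; apply; apply/cimP; exists i => // j jS.
  case: (h j jS) => [->|dji]; [by left | right].
  by rewrite (rev_other r) // negb_and ?iu ?iv ?orbT.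
subst i.
have vS : v \in S.
  apply/negPn/negP => vS; move: nD1 => /negP; apply.
  apply/cimP; exists u => // j jS; case: (h j jS) => [->|dju]; [by left | right].
  have jv : j != v by apply: contraNneq vS => <-.
  by rewrite (rev_other r) // ?(negbTE reversal_neq) ?(negbTE jv) ?andbF.
have hS j : j \in S -> [|| j == u, j == v | j \in P].
  move=> jS; case: (h j jS) => [->|dju]; first by rewrite eqxx.
  by rewrite in_other_parents dju /=; case: (j == v); rewrite ?orbT.
split => //.
case: (boolP [exists x in S, x \in P :\: Q]) => [/existsP [x /andP [xS xPQ]]|hn].
  by exists x.
move: nD1 => /negP; case; apply/cimP; exists v => // j jS.
case/or3P: (hS j jS) => [/eqP ->|/eqP ->|jP]; [by right; apply: (rev_uv r) | by left | right].
have jQ : j \in Q.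
  apply/negPn/negP => jQ; move/existsP: hn; apply; exists j.
  by rewrite jS inE jQ jP.
by move: jQ; rewrite in_other_parents => /andP [].
Qed.

Lemma cim_SP : cim D SP.
Proof.
apply/cimP; exists u; first by rewrite !inE eqxx.
move=> j; rewrite !inE => /or3P [/eqP ->|/eqP ->|/andP [_ dju]]; [by left | | by right].
by right; apply: (rev_vu r).
Qed.

Lemma cim_SQ : Q \subset P -> cim D SQ.
Proof.
move=> /subsetP QP; apply/cimP; exists u; first by rewrite !inE eqxx ?orbT.
move=> j; rewrite !inE => /or3P [/eqP ->|/eqP ->|jQ]; [| by left |].
  by right; apply: (rev_vu r).
by have := QP j; rewrite !inE jQ => /(_ isT) /andP [_ dju]; right.
Qed.

Lemma cim_reversal_no_triples :
  ntriples D D1 u v = 0 -> forall S, cim D S -> cim D1 S.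
Proof.
move=> h0 S cD; case: (boolP (cim D1 S)) => // nD1.
have [_ _ _ [x _ xPQ]] := cim_reversal_lost cD nD1.
by move: (triples0 reversal_neq h0 x); rewrite xPQ.
Qed.

Variable E : rel 'I_n.
Hypothesis c : compatible g D D1 E.

Lemma arcE_skel a b : E a b -> g a b.
Proof. by move=> h; rewrite -(compat_skel c) h. Qed.

Lemma same_cim_of : (forall S, cim D S -> ~~ cim D1 S -> cim E S) ->
  (forall S, cim D1 S -> ~~ cim D S -> ~~ cim E S) -> same_cim E D.
Proof.
move=> hA hB S cS; have hag := compat_agree c cS.
case eD: (cim D S); case eD1: (cim D1 S).
- by rewrite hag // eD eD1.
- by apply: hA; rewrite ?eD1.
- by apply/negbTE/hB; rewrite ?eD.
- by rewrite hag // eD eD1.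
Qed.

(* [x -> k <- v] would be an immorality of [E] on a set without [u], where
   [D] and [D1] agree and have no immorality since [v -> k] is impossible. *)
Lemma no_collider_at_parent x k :
  x \in P :\: Q -> k \in P -> k != x -> E v k -> E x k -> False.
Proof.
move=> xPQ kP kx evk exk.
have xP : x \in P by move: xPQ; rewrite inE => /andP [].
have nv := lost_parent_nadj xPQ.
have dkv : D k v by move: (arcE_skel evk); rewrite -(rev_skel r) (other_parents_no_arc kP).
have kv := other_parents_nv kP; have xv := other_parents_nv xP.
pose W := [set x; k; v].
have cardW : 1 < #|W| by apply/card_gt1P; exists k, v; rewrite !inE !eqxx ?orbT.
have uW : u \notin W.
  rewrite !inE negb_or negb_or eq_sym (other_parents_neq xP) eq_sym.
  by rewrite (other_parents_neq kP) reversal_neq.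
have cEW : cim E W.
  apply/cimP; exists k; first by rewrite !inE eqxx ?orbT.
  move=> j; rewrite !inE => /orP [/orP [/eqP ->|/eqP ->]|/eqP ->]; by [right | left | right].
have cDW : ~~ cim D W.
  apply/cimP => [[i]]; rewrite !inE => /orP [/orP [/eqP ->|/eqP ->]|/eqP ->] h.
  - have := h v; rewrite !inE eqxx ?orbT => /(_ isT) [e|dvx]; first by move: xv; rewrite e eqxx.
    by move: nv; rewrite skel_sym (arc_skel dvx).
  - have := h v; rewrite !inE eqxx ?orbT => /(_ isT) [e|dvk]; first by move: kv; rewrite e eqxx.
    by move: (other_parents_no_arc kP); rewrite dvk.
  - have := h x; rewrite !inE eqxx ?orbT => /(_ isT) [e|dxv]; first by move: xv; rewrite e eqxx.
    by move: nv; rewrite (arc_skel dxv).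
by move: cDW; rewrite -(compat_agree c cardW (esym (cim_reversal_notin uW))) cEW.
Qed.

Lemma sink_eq_u S x i : (forall j, j \in S -> [|| j == u, j == v | j \in P]) ->
  v \in S -> x \in S -> x \in P :\: Q -> i \in S ->
  (forall j, j \in S -> j = i \/ E j i) -> i = u.
Proof.
move=> hS vS xS xPQ iS h.
have xP : x \in P by move: xPQ; rewrite inE => /andP [].
have xv := other_parents_nv xP.
case/or3P: (hS i iS) => [/eqP //|/eqP iv|iP].
  subst i; case: (h x xS) => [e|exv]; first by move: xv; rewrite e eqxx.
  by move: (lost_parent_nadj xPQ); rewrite (arcE_skel exv).
have iv := other_parents_nv iP.
case: (h v vS) => [e|evi]; first by move: iv; rewrite e eqxx.
case: (eqVneq i x) => [ix|ix].
  by subst i; move: (lost_parent_nadj xPQ); rewrite skel_sym (arcE_skel evi).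
case: (h x xS) => [e|exi]; first by move: ix; rewrite e eqxx.
by case: (no_collider_at_parent xPQ iP ix evi exi).
Qed.

Lemma cim_SP_arcs x0 : x0 \in P :\: Q -> cim E SP -> E v u /\ forall z, z \in P -> E z u.
Proof.
move=> x0PQ /cimP [i iS h].
have x0P : x0 \in P by move: x0PQ; rewrite inE => /andP [].
have hS j : j \in SP -> [|| j == u, j == v | j \in P] by rewrite !inE.
have vS : v \in SP by rewrite !inE eqxx ?orbT.
have xS : x0 \in SP by rewrite /set2U !in_setU1 x0P ?orbT.
have iu := sink_eq_u hS vS xS x0PQ iS h; subst i.
split.
  by case: (h v vS) => // e; move: reversal_neq; rewrite e eqxx.
move=> z zP; case: (h z); first by rewrite /set2U !in_setU1 zP ?orbT.
  by move=> e; move: (other_parents_neq zP); rewrite e eqxx.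
by [].
Qed.

Lemma cim_lost_E x0 : x0 \in P :\: Q -> cim E SP ->
  forall S, cim D S -> ~~ cim D1 S -> cim E S.
Proof.
move=> x0PQ cE S cD nD1; have [evu hz] := cim_SP_arcs x0PQ cE.
have [uS vS hS _] := cim_reversal_lost cD nD1.
apply/cimP; exists u => // j jS.
by case/or3P: (hS j jS) => [/eqP ->|/eqP ->|/hz]; [left | right | right].
Qed.

Lemma cim_lost_notE : (forall x, x \in P :\: Q -> ~~ cim E (set2U u v [set x])) ->
  forall S, cim D S -> ~~ cim D1 S -> ~~ cim E S.
Proof.
move=> hx S cD nD1; have [uS vS hS [x xS xPQ]] := cim_reversal_lost cD nD1.
apply/negP => /cimP [i iS h].
have iu := sink_eq_u hS vS xS xPQ iS h; subst i.
have xu := other_parents_neq (setDP xPQ).1.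
move/negP: (hx x xPQ); apply; apply/cimP; exists u; first by rewrite !inE eqxx.
move=> j; rewrite !inE => /or3P [/eqP ->|/eqP ->|/eqP ->]; first by left.
  by case: (h v vS) => [e|evu]; [move: reversal_neq; rewrite e eqxx | right].
by case: (h x xS) => [e|exu]; [move: xu; rewrite e eqxx | right].
Qed.

Lemma count_triples_full x0 : x0 \in P :\: Q -> cim E SP ->
  count_cim E (triples u v P Q) = ntriples D D1 u v.
Proof.
move=> x0PQ cE; apply: eq_card => S; rewrite !inE.
case: (boolP [exists x in P :\: Q, val S == set2U u v [set x]]) => //=.
case/existsP=> x /andP [xPQ /eqP ->].
have [evu hz] := cim_SP_arcs x0PQ cE.
have xP := (setDP xPQ).1.
apply/cimP; exists u; first by rewrite !inE eqxx.
move=> j; rewrite !inE => /or3P [/eqP ->|/eqP ->|/eqP ->]; [by left | by right | by right; apply: hz].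
Qed.

Lemma count_triples0 : count_cim E (triples u v P Q) = 0 ->
  forall S, cim D S -> ~~ cim D1 S -> ~~ cim E S.
Proof.
move=> h0; apply: cim_lost_notE => x xPQ.
move/eqP: h0; rewrite cards_eq0 => /eqP /setP /(_ (bigset (card_set2U [set x] reversal_neq))).
by rewrite in_set0 in_set mem_triples //= => /negbT.
Qed.

End ReversalImsets.

Definition bonus n (E D D1 : rel 'I_n) u v :=
  (ntriples D D1 u v + (0 < ntriples D1 D v u)) * cim E (set2U u v (other_parents D u v)) +
  (ntriples D1 D v u + (0 < ntriples D D1 u v)) * cim E (set2U v u (other_parents D1 v u)).

Definition penalty n (E D D1 : rel 'I_n) u v :=
  count_cim E (triples u v (other_parents D u v) (other_parents D1 v u)) +
  count_cim E (triples v u (other_parents D1 v u) (other_parents D u v)).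

Definition bonus_max n (D D1 : rel 'I_n) u v : nat :=
  (0 < ntriples D D1 u v) || (0 < ntriples D1 D v u).

Lemma bonus_sym n (E D D1 : rel 'I_n) u v : bonus E D1 D v u = bonus E D D1 u v.
Proof. by rewrite /bonus addnC. Qed.

Lemma penalty_sym n (E D D1 : rel 'I_n) u v : penalty E D1 D v u = penalty E D D1 u v.
Proof. by rewrite /penalty addnC. Qed.

Lemma bonus_max_sym n (D D1 : rel 'I_n) u v : bonus_max D1 D v u = bonus_max D D1 u v.
Proof. by rewrite /bonus_max orbC. Qed.

Section Bonus.
Variables (n : nat) (g D D1 E : rel 'I_n) (u v : 'I_n).
Hypotheses (r : reversal g D D1 u v) (c : compatible g D D1 E).
Let r' := reversal_sym r.
Let c' := compatible_sym c.
Local Notation P := (other_parents D u v).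
Local Notation Q := (other_parents D1 v u).
Local Notation SP := (set2U u v P).
Local Notation SQ := (set2U v u Q).
Local Notation mX := (ntriples D D1 u v).
Local Notation mY := (ntriples D1 D v u).

Lemma cim_SQ_no_triples : mY = 0 -> cim E SQ.
Proof.
move=> h0; have QP : Q \subset P.
  apply/subsetP => y yQ; apply/negPn/negP => nyP.
  by move: (triples0 (reversal_neq r') h0 y); rewrite inE nyP yQ.
rewrite (compat_agree c); first exact: cim_SQ r QP.
  exact: card_set2U (reversal_neq r').
by rewrite (cim_SQ r QP) (cim_SP r').
Qed.

Lemma cim_SP_SQ_excl : 0 < mX -> 0 < mY -> cim E SP -> ~~ cim E SQ.
Proof.
move=> /triples_gt0 [x0 x0PQ] /triples_gt0 [y0 y0PQ] cP; apply/negP => cQ.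
have [evu _] := cim_SP_arcs r c x0PQ cP.
have [euv _] := cim_SP_arcs r' c' y0PQ cQ.
by move: (acyclic_asym (compat_acyclic c) evu); rewrite euv.
Qed.

Lemma count_triples_rev0 : E v u -> count_cim E (triples v u Q P) = 0.
Proof.
move=> evu; apply/eqP; rewrite cards_eq0; apply/eqP/setP => S; rewrite !inE.
apply/negP => /andP [/existsP [y /andP [yQP /eqP ->]] /cimP [i iS h]].
have yQ := (setDP yQP).1.
have hS j : j \in set2U v u [set y] -> [|| j == v, j == u | j \in Q].
  by rewrite /set2U !in_setU1 in_set1 => /or3P [/eqP ->|/eqP ->|/eqP ->]; rewrite ?eqxx ?yQ ?orbT.
have uS : u \in set2U v u [set y] by rewrite !inE eqxx orbT.
have yS : y \in set2U v u [set y] by rewrite !inE eqxx !orbT.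
have iv := sink_eq_u r' c' hS uS yS yQP iS h; subst i.
case: (h u uS) => [e|euv]; first by move: (reversal_neq r); rewrite e eqxx.
by move: (acyclic_asym (compat_acyclic c) evu); rewrite euv.
Qed.

Lemma bonus_le_pos : 0 < mX ->
  bonus E D D1 u v <= bonus_max D D1 u v + penalty E D D1 u v /\
  (bonus E D D1 u v = bonus_max D D1 u v + penalty E D D1 u v ->
    same_cim E D \/ same_cim E D1).
Proof.
rewrite /bonus /bonus_max /penalty => mXp; have [x0 x0PQ] := triples_gt0 mXp.
have hX : count_cim E (triples u v P Q) <= mX := count_cim_le _ _.
have hY : count_cim E (triples v u Q P) <= mY := count_cim_le _ _.
have D1_sub_D S : mY = 0 -> cim D1 S -> cim D S := cim_reversal_no_triples r'^~ S.
case: (posnP mY) => [mY0|mYp].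
  rewrite mY0 (cim_SQ_no_triples mY0) mXp /=.
  case eP: (cim E SP).
    rewrite (count_triples_full r c x0PQ eP); split; first lia.
    by move=> _; left; apply: (same_cim_of c (cim_lost_E r c x0PQ eP)) => S /D1_sub_D ->.
  split; first lia.
  move=> h; right; have h0 : count_cim E (triples u v P Q) = 0 by lia.
  by apply: (same_cim_of c' _ (count_triples0 r c h0)) => S /D1_sub_D ->.
rewrite mXp /=.
case eP: (cim E SP).
  have eQ : cim E SQ = false by apply/negbTE/cim_SP_SQ_excl.
  rewrite (count_triples_full r c x0PQ eP) eQ; split; first lia.
  move=> h; left; have h0 : count_cim E (triples v u Q P) = 0 by lia.
  exact: (same_cim_of c (cim_lost_E r c x0PQ eP) (count_triples0 r' c' h0)).
case eQ: (cim E SQ).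
  have [y0 y0PQ] := triples_gt0 mYp.
  rewrite (count_triples_full r' c' y0PQ eQ); split; first lia.
  move=> h; right; have h0 : count_cim E (triples u v P Q) = 0 by lia.
  exact: (same_cim_of c' (cim_lost_E r' c' y0PQ eQ) (count_triples0 r c h0)).
by split=> [|h]; lia.
Qed.

End Bonus.

Section BonusBound.
Variables (n : nat) (g D D1 : rel 'I_n) (u v : 'I_n).
Hypothesis r : reversal g D D1 u v.
Let r' := reversal_sym r.
Local Notation P := (other_parents D u v).
Local Notation Q := (other_parents D1 v u).
Local Notation mX := (ntriples D D1 u v).
Local Notation mY := (ntriples D1 D v u).

Lemma bonus_le E : compatible g D D1 E ->
  bonus E D D1 u v <= bonus_max D D1 u v + penalty E D D1 u v /\
  (bonus E D D1 u v = bonus_max D D1 u v + penalty E D D1 u v ->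
    same_cim E D \/ same_cim E D1).
Proof.
move=> c; case: (posnP mX) => [mX0|mXp]; last exact: bonus_le_pos r c mXp.
case: (posnP mY) => [mY0|mYp].
  have hX : count_cim E (triples u v P Q) <= mX := count_cim_le _ _.
  have hY : count_cim E (triples v u Q P) <= mY := count_cim_le _ _.
  rewrite /bonus /bonus_max /penalty mX0 mY0; split; first lia.
  move=> _; left; apply: (same_cim_of c) => S.
    by move=> /(cim_reversal_no_triples r mX0) ->.
  by move=> /(cim_reversal_no_triples r' mY0) ->.
have [h1 h2] := bonus_le_pos r' (compatible_sym c) mYp.
rewrite bonus_sym bonus_max_sym penalty_sym in h1 h2.
by split=> // /h2 [|]; [right | left].
Qed.

Lemma bonus_self : bonus D D D1 u v = bonus_max D D1 u v + penalty D D D1 u v.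
Proof.
have cD := compatible_self r.
have hX : count_cim D (triples u v P Q) <= mX := count_cim_le _ _.
rewrite /bonus /bonus_max /penalty (cim_SP r) (count_triples_rev0 r cD (rev_vu r)).
have -> : count_cim D (triples u v P Q) = mX.
  case: (posnP mX) => [mX0|/triples_gt0 [x0 x0PQ]]; first lia.
  exact: (count_triples_full r cD x0PQ (cim_SP r)).
case: (posnP mY) => [mY0|mYp].
  by rewrite (cim_SQ_no_triples r cD mY0) mY0; case: (posnP mX) => *; lia.
have -> : cim D (set2U v u Q) = false.
  apply/negbTE/negP => cQ; have [y0 y0PQ] := triples_gt0 mYp.
  have [duv _] := cim_SP_arcs r' (compatible_sym cD) y0PQ cQ.
  by move: (acyclic_asym (rev_acyclic r) (rev_vu r)); rewrite duv.
by case: (posnP mX) => *; lia.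
Qed.

End BonusBound.

Section ImsetVertices.
Local Open Scope ring_scope.
Variables (R : realFieldType) (n : nat).
Local Notation pt := (pt R n).
Implicit Types (d e : rel 'I_n).

Lemma char_imsetE d (S : bigsub n) : char_imset R d S = (cim d (val S))%:R.
Proof. by rewrite ffunE /cim; case: ifP. Qed.

Lemma sum_indicator (A : {set bigsub n}) : \sum_(S : bigsub n) (S \in A)%:R = #|A|%:R :> R.
Proof.
rewrite (eq_bigr (fun S => if S \in A then 1 else 0)) => [|S _]; last by case: (S \in A).
by rewrite -big_mkcond /= sumr_const.
Qed.

Lemma sum_indicator1 (S0 : bigsub n) (f : bigsub n -> R) :
  \sum_(S : bigsub n) (val S == val S0)%:R * f S = f S0.
Proof.
rewrite (bigD1 S0) //= eqxx mul1r big1 ?addr0 // => S ne.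
by rewrite val_eqE (negbTE ne) mul0r.
Qed.

Lemma eq_char_imset d e : (forall S : bigsub n, cim d (val S) = cim e (val S)) ->
  char_imset R d = char_imset R e.
Proof. by move=> h; apply/ffunP => S; rewrite !char_imsetE h. Qed.

Lemma same_cim_char_imset d e : same_cim d e -> char_imset R d = char_imset R e.
Proof. by move=> h; apply: eq_char_imset => S; apply: h; exact: (valP S). Qed.

(* [c_d] maximises [S |-> 2 c_d(S) - 1] on the 0/1 points, uniquely. *)
Lemma vertex_char_imset g d : acyclic d -> has_skeleton d g ->
  vertex (@CIM R n g) (char_imset R d).
Proof.
move=> hd hsk.
pose a : pt := [ffun S => 2 * (cim d (val S))%:R - 1].
pose Dset := [set S : bigsub n | cim d (val S)].
pose Dif e := [set S : bigsub n | cim e (val S) != cim d (val S)].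
have dot_a e : dot a (char_imset R e) = #|Dset|%:R - #|Dif e|%:R.
  rewrite /dot -!sum_indicator -sumrB; apply: eq_bigr => S _.
  by rewrite ffunE char_imsetE !inE; case: (cim d _); case: (cim e _); rewrite /=; ring.
apply: (vertex_conv (a := a) (b := #|Dset|%:R)).
- move=> y [e [_ [_ ->]]]; rewrite dot_a; have := ler0n R #|Dif e|; lra.
- by exists d.
- rewrite dot_a; suff -> : Dif d = set0 by rewrite cards0 subr0.
  by apply/setP => S; rewrite !inE eqxx.
- move=> y [e [_ [_ ->]]]; rewrite dot_a => h.
  have /eqP : #|Dif e|%:R = 0 :> R by lra.
  rewrite pnatr_eq0 cards_eq0 => /eqP /setP hD; apply: eq_char_imset => S.
  case: (eqVneq (cim e (val S)) (cim d (val S))) => // ne.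
  by move: (hD S); rewrite !inE ne.
Qed.

End ImsetVertices.

Section ReversalEdge.
Local Open Scope ring_scope.
Variables (R : realFieldType) (n : nat) (g D D1 : rel 'I_n) (u v : 'I_n).
Hypothesis r : reversal g D D1 u v.
Local Notation pt := (pt R n).
Local Notation P := (other_parents D u v).
Local Notation Q := (other_parents D1 v u).
Local Notation Xs := (triples u v P Q).
Local Notation Ys := (triples v u Q P).

Lemma sep_coordE (M al be : R) (b1 b2 b3 x y p q : bool) :
  (M * (b1%:R + b2%:R - 1) + al * p%:R + be * q%:R - x%:R - y%:R) * b3%:R =
  M * ((b1 && b2)%:R - ((b1 == b2) && (b3 != b1))%:R) + al * (p%:R * b3%:R)
  + be * (q%:R * b3%:R) - (x && b3)%:R - (y && b3)%:R.
Proof. by case: b1; case: b2; case: b3; case: x; case: y; rewrite /=; ring. Qed.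

Let alpha := (ntriples D D1 u v + (0 < ntriples D1 D v u))%N.
Let beta := (ntriples D1 D v u + (0 < ntriples D D1 u v))%N.
Let M : R := (alpha + beta + 1)%:R.
Let SP := bigset (card_set2U P (reversal_neq r)).
Let SQ := bigset (card_set2U Q (reversal_neq (reversal_sym r))).
Let sep : pt := [ffun S => M * ((cim D (val S))%:R + (cim D1 (val S))%:R - 1)
   + alpha%:R * (val S == val SP)%:R + beta%:R * (val S == val SQ)%:R
   - (S \in Xs)%:R - (S \in Ys)%:R].
Let Both := [set S : bigsub n | cim D (val S) && cim D1 (val S)].
Let Bad e := [set S : bigsub n |
  (cim D (val S) == cim D1 (val S)) && (cim e (val S) != cim D (val S))].
Let sep_max : R := M * #|Both|%:R + (bonus_max D D1 u v)%:R.

Lemma dot_sep e : dot sep (char_imset R e) =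
  M * (#|Both|%:R - #|Bad e|%:R) + (bonus e D D1 u v)%:R - (penalty e D D1 u v)%:R.
Proof.
have coord S : sep S * char_imset R e S =
  M * ((S \in Both)%:R - (S \in Bad e)%:R)
  + alpha%:R * ((val S == val SP)%:R * char_imset R e S)
  + beta%:R * ((val S == val SQ)%:R * char_imset R e S)
  - (S \in [set S in Xs | cim e (val S)])%:R - (S \in [set S in Ys | cim e (val S)])%:R.
  by rewrite ffunE char_imsetE sep_coordE !inE.
rewrite /dot (eq_bigr _ (fun S _ => coord S)).
rewrite sumrB sumrB big_split big_split -!mulr_sumr sumrB !sum_indicator.
rewrite !sum_indicator1 !char_imsetE /= /bonus /penalty -/(count_cim e Xs) -/(count_cim e Ys).
by rewrite !natrD !natrM; ring.
Qed.

Lemma dot_sep_le e : acyclic e -> has_skeleton e g ->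
  dot sep (char_imset R e) <= sep_max /\
  (dot sep (char_imset R e) = sep_max ->
    char_imset R e = char_imset R D \/ char_imset R e = char_imset R D1).
Proof.
move=> he hske; rewrite dot_sep /sep_max.
have bonus_le_ab : (bonus e D D1 u v <= alpha + beta)%N.
  by apply: leq_add; rewrite -[X in (_ <= X)%N]muln1 leq_mul2l leq_b1 orbT.
case: (posnP #|Bad e|) => [bad0|badp].
  have c : compatible g D D1 e.
    split=> // S cS eS; case: (eqVneq (cim e S) (cim D S)) => // ne.
    move/eqP: bad0; rewrite cards_eq0 => /eqP/setP/(_ (bigset cS)).
    by rewrite !inE /= ne eS eqxx.
  have [le_b eq_b] := bonus_le r c.
  rewrite bad0 subr0; split.
    by move: le_b; rewrite -(ler_nat R) natrD; lra.
  move=> h; have : (bonus e D D1 u v)%:R = (bonus_max D D1 u v + penalty e D D1 u v)%N%:R :> R.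
    by rewrite natrD; lra.
  by move/eqP; rewrite eqr_nat => /eqP /eq_b [] /same_cim_char_imset; [left | right].
have hb : 1 <= #|Bad e|%:R :> R by rewrite ler1n.
have hMb : M <= M * #|Bad e|%:R by rewrite ler_peMr ?ler0n.
have hA : (bonus e D D1 u v)%:R <= (alpha + beta)%:R :> R by rewrite ler_nat.
have hP : 0 <= (penalty e D D1 u v)%:R :> R by rewrite ler0n.
have ht : 0 <= (bonus_max D D1 u v)%:R :> R by rewrite ler0n.
have hM : M = (alpha + beta)%:R + 1 by rewrite /M natrD.
by rewrite mulrBr; split=> [|h]; last exfalso; lra.
Qed.

Lemma dot_sep_D : dot sep (char_imset R D) = sep_max.
Proof.
rewrite dot_sep /sep_max (bonus_self r) natrD.
suff -> : Bad D = set0 by rewrite cards0 subr0; ring.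
by apply/setP => S; rewrite !inE eqxx andbF.
Qed.

Lemma dot_sep_D1 : dot sep (char_imset R D1) = sep_max.
Proof.
rewrite dot_sep /sep_max -bonus_sym -penalty_sym -bonus_max_sym.
rewrite (bonus_self (reversal_sym r)) natrD.
suff -> : Bad D1 = set0 by rewrite cards0 subr0; ring.
by apply/setP => S; rewrite !inE; case: (cim D _); case: (cim D1 _).
Qed.

Lemma reversal_adjacent : char_imset R D != char_imset R D1 ->
  adjacent (@CIM R n g) (char_imset R D) (char_imset R D1).
Proof.
move=> ne; split; first exact: vertex_char_imset (rev_acyclic r) (rev_skel r).
split; first exact: vertex_char_imset (rev_acyclic1 r) (rev_skel1 r).
split; first exact/eqP.
apply: (edge_conv (a := sep) (b := sep_max)).
- by move=> y [e [he [hske ->]]]; case: (dot_sep_le he hske).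
- by exists D; split; [exact: rev_acyclic r | split; [exact: rev_skel r |]].
- by exists D1; split; [exact: rev_acyclic1 r | split; [exact: rev_skel1 r |]].
- exact: dot_sep_D.
- exact: dot_sep_D1.
- by move=> y [e [he [hske ->]]]; case: (dot_sep_le he hske).
Qed.

End ReversalEdge.

Section Disagreement.
Variables (n : nat) (g : rel 'I_n).
Implicit Types (d e : rel 'I_n).

Lemma rev_arc_skel d x y : acyclic d -> has_skeleton d g -> d x y ->
  has_skeleton (rev_arc d x y) g.
Proof.
move=> hd hsk dxy a b; rewrite -hsk.
case: (boolP ((a == y) && (b == x))) => [/andP [/eqP -> /eqP ->]|h1].
  by rewrite rev_arc_yx dxy orbT.
case: (boolP ((a == x) && (b == y))) => [/andP [/eqP -> /eqP ->]|h2].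
  by rewrite rev_arc_yx dxy orbT.
by rewrite !rev_arc_other // andbC.
Qed.

Lemma rev_arc_reversal d x y : acyclic d -> has_skeleton d g -> d x y ->
  acyclic (rev_arc d x y) -> reversal g d (rev_arc d x y) y x.
Proof.
move=> hd hsk dxy hrev; split => //.
- exact: rev_arc_skel.
- exact: rev_arc_yx.
- by move=> a b h1 h2; apply: rev_arc_other.
Qed.

Definition disagree d e := [set p : 'I_n * 'I_n | d p.1 p.2 && ~~ e p.1 p.2].

Lemma card_disagree_rev_arc d e x y : acyclic d -> has_skeleton d g -> has_skeleton e g ->
  d x y -> ~~ e x y -> #|disagree (rev_arc d x y) e| = #|disagree d e|.-1.
Proof.
move=> hd hsk hske dxy nexy; have xy := acyclic_neq hd dxy.
have eyx : e y x by move: (hske x y); rewrite -hsk dxy (negbTE nexy) /= => /esym.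
have -> : disagree (rev_arc d x y) e = disagree d e :\ (x, y).
  apply/setP => [[a b]]; rewrite !inE /= xpair_eqE.
  case: (boolP ((a == y) && (b == x))) => [/andP [/eqP -> /eqP ->]|h1].
    by rewrite rev_arc_yx eyx (acyclic_asym hd dxy) !andbF.
  case: (boolP ((a == x) && (b == y))) => [/andP [/eqP -> /eqP ->]|h2].
    by rewrite rev_arc_xy.
  by rewrite rev_arc_other.
have xy_in : (x, y) \in disagree d e by rewrite inE /= dxy nexy.
by rewrite (cardsD1 (x, y) (disagree d e)) xy_in.
Qed.

Lemma disagree0 d e : acyclic e -> has_skeleton d g -> has_skeleton e g ->
  #|disagree d e| = 0 -> d =2 e.
Proof.
move=> he hsk hske /eqP; rewrite cards_eq0 => /eqP /setP h0.
have sub a b : d a b -> e a b.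
  by move=> dab; apply/negPn/negP => ne; move: (h0 (a, b)); rewrite !inE /= dab ne.
move=> a b; apply/idP/idP => [/sub // | eab]; apply/negPn/negP => nd.
have dba : d b a by move: (hsk a b); rewrite -(hske a b) eab (negbTE nd) /= => ->.
by move: (acyclic_asym he eab); rewrite (sub _ _ dba).
Qed.

(* Orienting each disagreeing arc from its smaller to its larger end is
   injective since [d] is acyclic, and lands in the edges of [g]. *)
Lemma card_disagree_le d e : acyclic d -> has_skeleton d g ->
  #|disagree d e| <= num_edges g.
Proof.
move=> hd hsk.
pose f (p : 'I_n * 'I_n) := if p.1 < p.2 then p else (p.2, p.1).
have inj : {in disagree d e &, injective f}.
  move=> [a b] [a' b']; rewrite !inE /=.
  case/andP=> dab _; case/andP=> dab' _.
  rewrite /f /=.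
  case: ltnP => h; case: ltnP => h' //.
  - by case=> e1 e2; subst; move: (acyclic_asym hd dab); rewrite dab'.
  - by case=> e1 e2; subst; move: (acyclic_asym hd dab); rewrite dab'.
  - by case=> -> ->.
rewrite -(card_in_imset inj); apply/subset_leq_card/subsetP => q.
case/imsetP=> [[a b] /[!inE] /andP [dab _] ->].
have ab := acyclic_neq hd dab.
rewrite /f /=; case: (ltnP a b) => hab /=; first by rewrite hab -hsk dab.
by rewrite -hsk dab orbT andbT ltn_neqAle hab andbT eq_sym.
Qed.

End Disagreement.

Lemma walk_to_char_imset (R : realFieldType) n (g d' : rel 'I_n) :
  acyclic d' -> has_skeleton d' g ->
  forall k d, acyclic d -> has_skeleton d g -> #|disagree d d'| <= k ->
  exists s : seq (pt R n), size s <= k /\ walk (@CIM R n g) (char_imset R d) s /\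
    last (char_imset R d) s = char_imset R d'.
Proof.
move=> hd' hsk'; elim=> [|k IH] d hd hsk hk.
  exists [::]; split => //; split => //=.
  apply: eq_char_imset => S; apply: eq_cim; apply: (disagree0 hd' hsk hsk').
  by apply/eqP; rewrite -leqn0.
case: (posnP #|disagree d d'|) => [h0|hp].
  exists [::]; split => //; split => //=.
  by apply: eq_char_imset => S; apply: eq_cim; apply: (disagree0 hd' hsk hsk').
have [[p1 p2]] := card_gt0P hp; rewrite inE /= => /andP [dp nd'p].
have hsk_eq a b : d a b || d b a = d' a b || d' b a by rewrite hsk hsk'.
have [x [y [dxy nd'xy hrev]]] := exists_reversible_arc hd hd' hsk_eq dp nd'p.
have r := rev_arc_reversal hd hsk dxy hrev.
have hk1 : #|disagree (rev_arc d x y) d'| <= k.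
  by rewrite (card_disagree_rev_arc hd hsk hsk' dxy nd'xy) -ltnS (ltn_predK hp).
have [s [hs [hw hl]]] := IH _ hrev (rev_arc_skel hd hsk dxy) hk1.
case: (eqVneq (char_imset R d) (char_imset R (rev_arc d x y))) => [eq|ne].
  by exists s; rewrite eq; split => //; apply: leq_trans hs _.
exists (char_imset R (rev_arc d x y) :: s); split => //; split => //.
by split; [exact: reversal_adjacent r ne | exact: hw].
Qed.

Theorem mainTheorem1 (R : realFieldType) (n : nat) (g : rel 'I_n) :
  simple_graph g -> @diam_le R n (@CIM R n g) (num_edges g).
Proof.
move=> _ x y hx hy.
have [d [hd [hsk ->]]] := vertex_conv_mem hx.
have [d' [hd' [hsk' ->]]] := vertex_conv_mem hy.
exact: (walk_to_char_imset R hd' hsk' hd hsk (card_disagree_le d' hd hsk)).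
Qed.
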